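(* Let $\alpha,\beta\in\mathbb N^N$ with $\alpha_j\le\beta_j$ for all $j$, and let $S:\beta/\alpha\to\mathbb N$ be a row strict tableau. Let $I\subseteq[N]$ be the set of rows of $S$ containing a $0$, and let $T$ be the row strict tableau of shape $\beta/(\alpha+\varepsilon_I)$ with entries in $\mathbb Z_+$ obtained by deleting all zeros from $S$. Then \[ h_{w_0}(T)=h_{w_0}(S)-h_I(\alpha). \]
   Context: Row shapes: for $\alpha,\beta\in\mathbb Z^N$ with $\alpha_j\le\beta_j$, row $j$ of $\beta/\alpha$ consists of boxes with $x$-coordinates $\alpha_j+1,\dots,\beta_j$; boxes at $x$-coordinates $\alpha_j$ and $\beta_j+1$ are said to be adjacent to the left and right ends of row $j$. A $w_0$-triple is $(u,v,w)$ with $v$ a box in row $r$, $u,w$ each a box of or adjacent to a row $j>r$, with $x$-coordinates $i_u=i_v$, $i_w=i_v+1$. A row strict tableau $S:\beta/\alpha\to\mathcal A$ ($\mathcal A$ totally ordered) is strictly increasing along rows. A $w_0$-triple is increasing in $S$ if $S(u)<S(v)<S(w)$, with the conventions $S(u)=-\infty$ if $u$ is adjacent to the left end of a row and $S(w)=+\infty$ if $w$ is adjacent to the right end; $h_{w_0}(S)$ is the number of increasing $w_0$-triples. $\varepsilon_I=\sum_{i\in I}\varepsilon_i$, and $h_I(\alpha)=|\{(r,s):1\le r<s\le N,\ r\in I,\ s\notin I,\ \alpha_s=\alpha_r+1\}|$. *)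

From mathcomp Require Import all_boot all_order all_algebra.
Set Implicit Arguments. Unset Strict Implicit. Unset Printing Implicit Defensive.

(* Rows are indexed by 'I_N (row j of the paper is row j-1 here; only the
   order of rows matters).  A tableau is a function
   S : 'I_N -> nat -> nat, S j i being the entry of the box (j,i); only the
   values at boxes of the shape are relevant. *)

Definition is_box N (alpha beta : 'I_N -> nat) (j : 'I_N) (i : nat) : bool :=
  (alpha j < i <= beta j)%N.

Definition row_strict N (alpha beta : 'I_N -> nat) (S : 'I_N -> nat -> nat) : Prop :=
  forall (j : 'I_N) (i : nat), is_box alpha beta j i -> is_box alpha beta j i.+1 ->
    (S j i < S j i.+1)%N.

(* The w0-triple (u,v,w) with v = box (r,i), u = (j,i), w = (j,i+1), r < j,
   where u, w are boxes of or adjacent to row j, i.e. alpha j <= i <= beta j.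
   It is increasing if S(u) < S(v) < S(w), with S(u) = -oo when u is adjacent
   to the left end (i = alpha j) and S(w) = +oo when w is adjacent to the right
   end (i + 1 = beta j + 1). *)
Definition incr_w0_triple N (alpha beta : 'I_N -> nat) (S : 'I_N -> nat -> nat)
    (r j : 'I_N) (i : nat) : bool :=
  [&& (r < j)%N, is_box alpha beta r i, (alpha j <= i <= beta j)%N,
      (i == alpha j) || (S j i < S r i)%N &
      (i == beta j) || (S r i < S j i.+1)%N].

Definition h_w0 N (alpha beta : 'I_N -> nat) (S : 'I_N -> nat -> nat) : nat :=
  \sum_(r < N) \sum_(j < N) \sum_(0 <= i < (beta r).+1)
     incr_w0_triple alpha beta S r j i.

Definition add_eps N (alpha : 'I_N -> nat) (I : {set 'I_N}) : 'I_N -> nat :=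
  fun j => (alpha j + (j \in I))%N.

Definition h_I N (I : {set 'I_N}) (alpha : 'I_N -> nat) : nat :=
  #|[set rs : 'I_N * 'I_N | [&& (rs.1 < rs.2)%N, rs.1 \in I, rs.2 \notin I &
                               alpha rs.2 == (alpha rs.1).+1]]|.

Definition zero_rows N (alpha beta : 'I_N -> nat) (S : 'I_N -> nat -> nat) : {set 'I_N} :=
  [set j : 'I_N | [exists i : 'I_((beta j).+1), is_box alpha beta j i && (S j i == 0%N)]].

From mathcomp Require Import all_boot all_order all_algebra.
From mathcomp Require Import zify.
Import GRing.Theory.

Set Implicit Arguments.
Unset Strict Implicit.
Unset Printing Implicit Defensive.

(* Since S is row strict with entries in nat, a zero can only occupy the first
   box alpha_r + 1 of a row r, so T is S with exactly these boxes removed for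
   r in I, and all its remaining entries are positive.  If the middle box v is a deleted zero, the triple is
   increasing in S iff u is adjacent to the left end of a row j > r with
   alpha_j = alpha_r + 1 and j not in I (for j in I, S(w) = 0 fails); these are
   exactly the pairs counted by h_I(alpha).  Every other triple keeps its
   status: a deleted zero in position u compares with the positive S(v) just
   like -oo, and a triple whose u lies left of a deleted zero w was never
   increasing. *)

Lemma row_strict_lt N (alpha beta : 'I_N -> nat) (S : 'I_N -> nat -> nat) j m n :
  row_strict alpha beta S -> alpha j < m -> m < n <= beta j -> S j m < S j n.
Proof.
move=> rowS am.
have step k : alpha j < k < beta j -> S j k < S j k.+1.
  by move=> akb; apply: rowS; rewrite /is_box; lia.
elim: n => // n IH; rewrite ltnS leq_eqVlt => /andP[/orP[/eqP <-|mn] nb].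
  by apply: step; lia.
by apply: ltn_trans (IH _) (step _ _); lia.
Qed.

Lemma h_I_sum N (I : {set 'I_N}) (alpha : 'I_N -> nat) :
  h_I I alpha = \sum_(r < N) \sum_(j < N)
    [&& r < j, r \in I, j \notin I & alpha j == (alpha r).+1].
Proof.
rewrite pair_big /h_I -sum1_card big_mkcond /=.
by apply: eq_bigr => -[r j] _; rewrite inE; case: (_ && _).
Qed.

Section DeleteZeros.

Variables (N : nat) (alpha beta : 'I_N -> nat) (S : 'I_N -> nat -> nat).
Hypothesis alpha_le_beta : forall j, alpha j <= beta j.
Hypothesis rowS : row_strict alpha beta S.

Local Notation I := (zero_rows alpha beta S).
Local Notation alphaI := (add_eps alpha I).

Lemma zero_entry_first_box k i :
  is_box alpha beta k i -> S k i = 0 -> i = (alpha k).+1.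
Proof.
move=> box Si0; have := @row_strict_lt _ _ _ _ k (alpha k).+1 i rowS (ltnSn _).
by rewrite Si0 ltn0 => /implyP; move: box; rewrite /is_box; lia.
Qed.

Lemma mem_zero_rows k :
  (k \in I) = (alpha k < beta k) && (S k (alpha k).+1 == 0).
Proof.
rewrite inE; apply/existsP/andP => [[[i ib]] /= /andP[box /eqP Si0]|[ab S0]].
  have ei := zero_entry_first_box box Si0.
  by move: box Si0; rewrite /is_box ei => /andP[_ ->] ->.
by exists (Ordinal (ab : (alpha k).+1 < (beta k).+1)); rewrite /is_box /= ltnSn ab.
Qed.

Lemma entry_gt0 k i : is_box alpha beta k i ->
  (k \notin I) || (i != (alpha k).+1) -> 0 < S k i.
Proof.
move=> box; apply: contraTT; rewrite -eqn0Ngt negb_or !negbK => /eqP Si0.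
have ib : i < (beta k).+1 by move: box; rewrite /is_box; lia.
rewrite (zero_entry_first_box box Si0) eqxx andbT inE.
by apply/existsP; exists (Ordinal ib); rewrite /= box Si0.
Qed.

Lemma incr_w0_triple_first_box_zero r j : r \in I ->
  incr_w0_triple alpha beta S r j (alpha r).+1 =
  [&& r < j, j \notin I & alpha j == (alpha r).+1].
Proof.
rewrite mem_zero_rows => /andP[ab /eqP S0].
rewrite /incr_w0_triple /is_box S0 ltn0 orbF ltnSn ab /= eq_sym.
case: (r < j) => //=; case: eqP => [<-|_] /=; last by rewrite !andbF.
rewrite leqnn alpha_le_beta mem_zero_rows negb_and -leqNgt lt0n /= andbT.
by rewrite eqn_leq alpha_le_beta.
Qed.

Lemma incr_w0_triple_add_eps r j i : (r \notin I) || (i != (alpha r).+1) ->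
  incr_w0_triple alphaI beta S r j i = incr_w0_triple alpha beta S r j i.
Proof.
move=> off; have box_r : is_box alphaI beta r i = is_box alpha beta r i.
  by rewrite /is_box /add_eps; move: off; case: (r \in I) => /=; lia.
rewrite /incr_w0_triple box_r; case box: (is_box alpha beta r i); rewrite ?andbF //=.
have Sr_pos := entry_gt0 box off.
rewrite /add_eps; case: (boolP (j \in I)) => [|_]; last by rewrite addn0.
rewrite mem_zero_rows addn1 => /andP[ab /eqP S0].
have [->|ne] := eqVneq i (alpha j); first by rewrite ltnn (ltn_eqF ab) S0 ltn0 /= !andbF.
have [ei|ne'] := eqVneq i (alpha j).+1.
  by rewrite ei in Sr_pos *; rewrite S0 Sr_pos ab leqnSn ltnSn.
by rewrite [alpha j < i]ltn_neqAle (eq_sym (alpha j)) ne.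
Qed.

Lemma sum_incr_w0_triple_add_eps r j :
  \sum_(0 <= i < (beta r).+1) incr_w0_triple alpha beta S r j i =
  \sum_(0 <= i < (beta r).+1) incr_w0_triple alphaI beta S r j i
    + [&& r < j, r \in I, j \notin I & alpha j == (alpha r).+1].
Proof.
have [rI|rI] /= := boolP (r \in I); last first.
  by rewrite andbF addn0; apply: eq_bigr => i _; rewrite incr_w0_triple_add_eps ?rI.
have first_box : (alpha r).+1 \in index_iota 0 (beta r).+1.
  by move: rI; rewrite mem_zero_rows mem_index_iota => /andP[ab _].
rewrite !(bigD1_seq _ first_box (iota_uniq _ _)) /= incr_w0_triple_first_box_zero //.
rewrite {2}/incr_w0_triple /is_box /add_eps rI addn1 ltnn andbF add0n addnC.
by congr (_ + _); apply: eq_bigr => i ne; rewrite incr_w0_triple_add_eps // ne orbT.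
Qed.

Lemma h_w0_add_eps_zero_rows :
  h_w0 alpha beta S = h_w0 alphaI beta S + h_I I alpha.
Proof.
rewrite h_I_sum /h_w0 -big_split; apply: eq_bigr => r _.
by rewrite -big_split; apply: eq_bigr => j _; apply: sum_incr_w0_triple_add_eps.
Qed.

End DeleteZeros.

Theorem lemma5p3p3 (N : nat) (alpha beta : 'I_N -> nat) (S : 'I_N -> nat -> nat) :
  (forall j, (alpha j <= beta j)%N) ->
  row_strict alpha beta S ->
  let I := zero_rows alpha beta S in
  let T := S in
  ((h_w0 (add_eps alpha I) beta T)%:Z =
     (h_w0 alpha beta S)%:Z - (h_I I alpha)%:Z)%R.
Proof.
move=> alpha_le_beta rowS I T.
by rewrite (h_w0_add_eps_zero_rows alpha_le_beta rowS) PoszD addrK.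
Qed.
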